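(* Let $\Pi=(\mathsf A,\mathsf B)$ be a protocol with $\mathrm{val}(\Pi)<1$. Then $\mathrm{Best}_{\mathsf B}\big(\Pi|_{M^{\mathsf A}_\Pi}\big)=1$.
   Context: An $m$-round single-bit-message protocol $\Pi$ is identified with the complete binary tree of height $m$ (nodes: binary strings of length $\le m$, root $\lambda$), with a control scheme, edge probabilities $e_\Pi(u,ub)$, common output $\chi_\Pi:\text{leaves}\to\{0,1\}$, node-visit probabilities $v_\Pi(u)$, leaf distribution $L_\Pi$ and value $\mathrm{val}(\Pi)=\mathbb E_{L_\Pi}[\chi_\Pi]$. For a node $u$ with $v_\Pi(u)>0$, $\Pi_u$ is the protocol on the subtree rooted at $u$ (conditioned on prefix $u$); otherwise $\Pi_u=\perp$, and expectations over $L_\perp$ are $0$. For a measure $M:\text{leaves}\to[0,1]$, $\mathbb E_{L_{\Pi_u}}[M]$ denotes the expectation of $M$ restricted to leaves under $u$. The $\mathsf A$-dominated measure $M^{\mathsf A}_\Pi$: if $\Pi$ has $0$ rounds with single leaf $\ell$, $M^{\mathsf A}_\Pi(\ell)=\chi_\Pi(\ell)$; otherwise, for a leaf $\ell$ with first bit $b$, writing $\mu_c=\mathbb E_{L_{\Pi_c}}[M^{\mathsf A}_{\Pi_c}]$: $M^{\mathsf A}_\Pi(\ell)=0$ if $e_\Pi(\lambda,b)=0$; $=M^{\mathsf A}_{\Pi_b}(\ell)$ if $e_\Pi(\lambda,b)=1$, or if $e_\Pi(\lambda,b)\in(0,1)$ and ($\mathsf A$ controls the root or $\mu_b\le\mu_{1-b}$);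 $=\frac{\mu_{1-b}}{\mu_b}M^{\mathsf A}_{\Pi_b}(\ell)$ otherwise. Conditional protocol: for $M$ with $\mathbb E_{L_\Pi}[M]<1$, $\Pi|_M$ has the same control scheme and output function as $\Pi$, and edge distribution $e_{\Pi|_M}(u,ub)=0$ if $\mathbb E_{L_{\Pi_u}}[M]=1$, and $e_{\Pi|_M}(u,ub)=e_\Pi(u,ub)\cdot\frac{1-\mathbb E_{L_{\Pi_{ub}}}[M]}{1-\mathbb E_{L_{\Pi_u}}[M]}$ otherwise. A deterministic strategy $\mathsf B'$ for $\mathsf B$ in a protocol $\Pi'$ is valid if $v_{\Pi'}(u)=0\Rightarrow v_{(\mathsf A,\mathsf B')}(u)=0$; $\mathrm{Best}_{\mathsf B}(\Pi')=\max_{\text{valid }\mathsf B'}(1-\mathrm{val}(\mathsf A,\mathsf B'))$. *)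

From HB Require Import structures.
From mathcomp Require Import all_boot all_order all_algebra.
Set Implicit Arguments. Unset Strict Implicit. Unset Printing Implicit Defensive.
Import Order.TTheory GRing.Theory Num.Theory.
Local Open Scope ring_scope.

(* An m-round single-bit-message protocol on the complete binary tree of
   height m.  Nodes are bit strings (seq bool), root = [::], the children of
   u are rcons u false / rcons u true.
   - ctrlA u   : true iff A controls node u (B controls it otherwise);
   - edge u b  : e(u, ub);
   - out l     : chi(l) for leaves l (strings of length rounds). *)
Record protocol (R : realFieldType) := Protocol {
  rounds : nat;
  ctrlA : seq bool -> bool;
  edge : seq bool -> bool -> R;
  out : seq bool -> bool }.

Section Protocols.
Variable R : realFieldType.
Implicit Types (P : protocol R) (M : seq bool -> R).

Definition proto_wf P : Prop :=
  forall u, (size u < rounds P)%N ->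
    (forall b, 0 <= edge P u b) /\ edge P u false + edge P u true = 1.

Fixpoint leaves (n : nat) : seq (seq bool) :=
  if n is n'.+1 then [seq b :: w | b <- [:: false; true], w <- leaves n']
  else [:: [::]].

Fixpoint pathp P (u w : seq bool) : R :=
  if w is b :: w' then edge P u b * pathp P (rcons u b) w' else 1.

Definition visit P u := pathp P [::] u.

Definition Exp P M : R := \sum_(l <- leaves (rounds P)) visit P l * M l.

Definition pval P : R := Exp P (fun l => (nat_of_bool (out P l))%:R).

(* the protocol on the subtree rooted at u (leaves of P_u are the
   suffixes w with u ++ w a leaf of P); only meaningful if visit P u > 0 *)
Definition subp P (u : seq bool) : protocol R :=
  Protocol (rounds P - size u) (fun w => ctrlA P (u ++ w))
           (fun w c => edge P (u ++ w) c) (fun w => out P (u ++ w)).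

(* E_{L_{P_u}}[M] for M a measure on the leaves of P_u, with P_u = bot
   (expectation 0) when visit P u = 0 *)
Definition ExpAt P u (M : seq bool -> R) : R :=
  if 0 < visit P u then Exp (subp P u) M else 0.

Fixpoint domA (n : nat) P (l : seq bool) : R :=
  match n, l with
  | 0, _ => (nat_of_bool (out P l))%:R
  | n'.+1, b :: l' =>
      let mu c := ExpAt P [:: c] (domA n' (subp P [:: c])) in
      if edge P [::] b == 0 then 0
      else if (edge P [::] b == 1) || ctrlA P [::] || (mu b <= mu (~~ b))
           then domA n' (subp P [:: b]) l'
           else mu (~~ b) / mu b * domA n' (subp P [:: b]) l'
  | _.+1, [::] => 0
  end.

Definition MA P : seq bool -> R := domA (rounds P) P.

Definition cond P M : protocol R :=
  Protocol (rounds P) (ctrlA P)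
    (fun u b =>
       let Eu := ExpAt P u (fun w => M (u ++ w)) in
       if Eu == 1 then 0
       else edge P u b * (1 - ExpAt P (rcons u b) (fun w => M (rcons u b ++ w)))
              / (1 - Eu))
    (out P).

Definition play P (B' : seq bool -> bool) : protocol R :=
  Protocol (rounds P) (ctrlA P)
    (fun u b => if ctrlA P u then edge P u b else (nat_of_bool (b == B' u))%:R)
    (out P).

Definition validB P (B' : seq bool -> bool) : Prop :=
  forall u, (size u <= rounds P)%N -> visit P u = 0 -> visit (play P B') u = 0.

Definition BestB_is P (r : R) : Prop :=
  (exists B', validB P B' /\ 1 - pval (play P B') = r) /\
  (forall B', validB P B' -> 1 - pval (play P B') <= r).

End Protocols.

(* Write mu(u) for the conditional expectation of M := M^A_P below u.  Below a node u visited
   with positive probability, M is a constant multiple s_u of M^A_{P_u}, and moving to a child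
   b multiplies s_u by a factor that is 1 at A-nodes; at a B-node it is 1 for the child with
   the smaller mu_c, while the other child is scaled down to the same value.  So at a B-node
   both live children have the same mu, equal to mu(u) by the martingale property, and the
   B-strategy that always moves to a child with factor 1 keeps mu constant.  Since the edge
   probabilities of P|_M are e(u,ub) (1 - mu(ub)) / (1 - mu(u)), this strategy never takes an
   edge of probability 0 there.  Along its plays s_u = 1, so mu(l) = chi(l) at a leaf l; and
   every node reached in P|_M has mu <> 1 (at the root mu = E[M] <= val(P) < 1), so every leaf
   reached has chi(l) = 0. *)

From mathcomp Require Import all_boot all_order all_algebra.
From mathcomp Require Import zify.
Set Implicit Arguments. Unset Strict Implicit. Unset Printing Implicit Defensive.
Import Order.TTheory GRing.Theory Num.Theory.
Local Open Scope ring_scope.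

Section ProtocolTheory.
Variable R : realFieldType.
Implicit Types (P Q : protocol R) (M N : seq bool -> R).

Definition proto_eq P Q :=
  [/\ rounds P = rounds Q, ctrlA P =1 ctrlA Q, edge P =2 edge Q & out P =1 out Q].

Lemma proto_eq_subp P Q u : proto_eq P Q -> proto_eq (subp P u) (subp Q u).
Proof. by case=> hr hc he ho; split=> //= *; rewrite hr. Qed.

Lemma proto_eq_subp_nil P : proto_eq (subp P [::]) P.
Proof. by split=> //=; rewrite subn0. Qed.

Lemma proto_eq_subp_cat P u v : proto_eq (subp (subp P u) v) (subp P (u ++ v)).
Proof. by split=> /= [|w|w b|w]; rewrite ?catA // size_cat subnDA. Qed.

Lemma pathp_subp P u v w : pathp (subp P u) v w = pathp P (u ++ v) w.
Proof. by elim: w v => [|b w IH] v //=; rewrite IH rcons_cat. Qed.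

Lemma pathp_rcons P u w b : pathp P u (rcons w b) = pathp P u w * edge P (u ++ w) b.
Proof.
elim: w u => [|c w IH] u /=; first by rewrite cats0 mulr1 mul1r.
by rewrite IH mulrA cat_rcons.
Qed.

Lemma visit_nil P : visit P [::] = 1.
Proof. by []. Qed.

Lemma visit_rcons P u b : visit P (rcons u b) = visit P u * edge P u b.
Proof. exact: pathp_rcons. Qed.

Lemma eq_Exp P M N : M =1 N -> Exp P M = Exp P N.
Proof. by move=> eqMN; apply: eq_bigr => l _; rewrite eqMN. Qed.

Lemma Exp_proto_eq P Q M : proto_eq P Q -> Exp P M = Exp Q M.
Proof.
case=> hr _ he _; rewrite /Exp /visit hr; apply: eq_bigr => l _.
by congr (_ * _); elim: l [::] => [|b l IH] u //=; rewrite he IH.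
Qed.

Lemma size_mem_leaves n l : l \in leaves n -> size l = n.
Proof.
elim: n l => [|n IH] l /=; first by rewrite inE => /eqP->.
by rewrite cats0 mem_cat => /orP[] /mapP[w /IH <- ->].
Qed.

Lemma Exp_rounds0 P M : rounds P = 0%N -> Exp P M = M [::].
Proof. by move=> h; rewrite /Exp h big_seq1 mul1r. Qed.

Lemma Exp_roundsS P M n : rounds P = n.+1 ->
  Exp P M = edge P [::] false * Exp (subp P [:: false]) (fun w => M (false :: w))
          + edge P [::] true * Exp (subp P [:: true]) (fun w => M (true :: w)).
Proof.
move=> h; rewrite /Exp h /= cats0 big_cat !big_map !big_distrr /=.
by congr (_ + _); rewrite h subSS subn0; apply: eq_bigr => w _;
  rewrite /visit pathp_subp cats0 [pathp P [::] _]/= mulrA.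
Qed.

(* Conditional protocols need not be well formed: all edges leaving a node whose
   conditional expectation is 1 are 0. *)
Definition edges_ge0 P := forall u b, (size u < rounds P)%N -> 0 <= edge P u b.

Lemma wf_edges_ge0 P : proto_wf P -> edges_ge0 P.
Proof. by move=> wfP u b /wfP[]. Qed.

Lemma wf_subp P u : proto_wf P -> proto_wf (subp P u).
Proof. by move=> wfP w /= hw; apply: wfP; rewrite size_cat; lia. Qed.
Arguments wf_subp {P} u.

Lemma visit_ge0 P u : edges_ge0 P -> (size u <= rounds P)%N -> 0 <= visit P u.
Proof.
move=> geP; elim/last_ind: u => [|u b IH]; first by rewrite visit_nil ler01.
rewrite size_rcons visit_rcons => hu.
by rewrite mulr_ge0 ?geP // IH // ltnW.
Qed.

Lemma visit_gt0 P u :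
  edges_ge0 P -> (size u <= rounds P)%N -> (0 < visit P u) = (visit P u != 0).
Proof. by move=> geP hu; rewrite lt0r visit_ge0 ?andbT. Qed.

Lemma ler_Exp P M N : edges_ge0 P -> (forall l, M l <= N l) -> Exp P M <= Exp P N.
Proof.
move=> geP leMN; rewrite /Exp big_seq [leRHS]big_seq; apply: ler_sum => l hl.
by rewrite ler_wpM2l ?visit_ge0 ?(size_mem_leaves hl).
Qed.

Lemma Exp_ge0 P M : edges_ge0 P -> (forall l, 0 <= M l) -> 0 <= Exp P M.
Proof.
move=> geP ge0M; rewrite /Exp big_seq; apply: sumr_ge0 => l hl.
by rewrite mulr_ge0 ?visit_ge0 ?(size_mem_leaves hl).
Qed.

Lemma pval_ge0 P : edges_ge0 P -> 0 <= pval P.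
Proof. by move=> geP; apply: Exp_ge0 => // l; rewrite ler0n. Qed.

Lemma Exp_cst P c : proto_wf P -> Exp P (fun=> c) = c.
Proof.
move: {2}(rounds P) (erefl (rounds P)) => n; elim: n P => [|n IH] P hr wfP.
  exact: Exp_rounds0.
have /wfP[_ sum_edges] : (size (@nil bool) < rounds P)%N by rewrite hr.
have IHb b : Exp (subp P [:: b]) (fun=> c) = c.
  by apply: IH; [rewrite /= hr subn1 | exact: wf_subp].
by rewrite (Exp_roundsS _ hr) !IHb -mulrDl sum_edges mul1r.
Qed.

Lemma ExpZ P c M : Exp P (fun l => c * M l) = c * Exp P M.
Proof. by rewrite /Exp big_distrr; apply: eq_bigr => l _; rewrite mulrCA. Qed.

Lemma Exp_in01 P M : proto_wf P -> (forall l, 0 <= M l <= 1) -> 0 <= Exp P M <= 1.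
Proof.
move=> wfP M01; have geP := wf_edges_ge0 wfP.
apply/andP; split; first by apply: Exp_ge0 => // l; case/andP: (M01 l).
by rewrite -[leRHS](Exp_cst 1 wfP); apply: ler_Exp => // l; case/andP: (M01 l).
Qed.

(* [muA n Q c] is the paper's mu_c at the root of [Q], and [facA n Q b] the factor by
   which M^A_Q rescales M^A_{Q_b} on the subtree [b]. *)
Definition muA n Q c : R := ExpAt Q [:: c] (domA n (subp Q [:: c])).

Definition facA n Q b : R :=
  if (edge Q [::] b == 1) || ctrlA Q [::] || (muA n Q b <= muA n Q (~~ b)) then 1
  else muA n Q (~~ b) / muA n Q b.

Lemma domA_cons n Q b l : domA n.+1 Q (b :: l) =
  if edge Q [::] b == 0 then 0 else facA n Q b * domA n (subp Q [:: b]) l.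
Proof. by rewrite /= /facA; case: ifP => //; case: ifP; rewrite ?mul1r. Qed.

Lemma domA_proto_eq n P Q l : proto_eq P Q -> domA n P l = domA n Q l.
Proof.
elim: n P Q l => [|n IH] P Q l eqPQ; case: (eqPQ) => _ hc he ho; first by rewrite /= ho.
case: l => [|b l] //.
have eq_muA c : muA n P c = muA n Q c.
  rewrite /muA /ExpAt /visit /= he (Exp_proto_eq _ (proto_eq_subp _ eqPQ)).
  by case: ifP => // _; apply: eq_Exp => w; apply/IH/proto_eq_subp.
by rewrite !domA_cons /facA !eq_muA he hc (IH _ _ l (proto_eq_subp _ eqPQ)).
Qed.

Lemma muA_ge0 n Q c : proto_wf Q -> (forall l, 0 <= domA n (subp Q [:: c]) l) ->
  0 <= muA n Q c.
Proof.
rewrite /muA /ExpAt; case: ifP => // _ wfQ domA_nneg.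
by apply: Exp_ge0 => //; exact/wf_edges_ge0/wf_subp.
Qed.

Lemma facA_in01 n Q b : (forall c, 0 <= muA n Q c) -> 0 <= facA n Q b <= 1.
Proof.
move=> muA_nneg; rewrite /facA; case: ifP => [_|/negbT]; first by rewrite ler01 lexx.
rewrite !negb_or -ltNge => /andP[_ lt_muA].
have muA_b_gt0 : 0 < muA n Q b by apply: le_lt_trans lt_muA.
by rewrite divr_ge0 ?muA_nneg //= ler_pdivrMr // mul1r ltW.
Qed.

Lemma facA_mul_muA n Q b : ~~ ctrlA Q [::] -> edge Q [::] b != 1 ->
  (forall c, 0 <= muA n Q c) ->
  facA n Q b * muA n Q b = Num.min (muA n Q b) (muA n Q (~~ b)).
Proof.
move=> notA e_neq1 muA_nneg; rewrite /facA (negbTE e_neq1) (negbTE notA) /=.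
case: leP => [_|lt_muA]; first by rewrite mul1r.
by rewrite mulfVK // gt_eqF // (le_lt_trans _ lt_muA).
Qed.

Lemma domA_bound n Q l : proto_wf Q -> 0 <= domA n Q l <= (out Q l)%:R.
Proof.
elim: n Q l => [|n IH] Q l wfQ; first by rewrite lexx ler0n.
case: l => [|b l]; first by rewrite /= lexx ler0n.
have muA_nneg c : 0 <= muA n Q c.
  by apply: muA_ge0 => // w; case/andP: (IH _ w (wf_subp [:: c] wfQ)).
rewrite domA_cons; case: ifP => _; first by rewrite lexx ler0n.
have /andP[fac_ge0 fac_le1] := facA_in01 b muA_nneg.
have /andP[dom_ge0 dom_le] := IH (subp Q [:: b]) l (wf_subp [:: b] wfQ).
by rewrite mulr_ge0 //= (le_trans _ dom_le) // ler_piMl.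
Qed.

Lemma MA_in01 P l : proto_wf P -> 0 <= MA P l <= 1.
Proof.
move=> /(domA_bound (rounds P) l)/andP[-> le_out] /=.
by apply: le_trans le_out _; case: (out P l); rewrite ?ler01.
Qed.

Lemma Exp_MA_le_pval P : proto_wf P -> Exp P (MA P) <= pval P.
Proof.
move=> wfP; apply: ler_Exp (wf_edges_ge0 wfP) _ => l.
by case/andP: (domA_bound (rounds P) l wfP).
Qed.

Definition ExpNode P M u : R := ExpAt P u (fun w => M (u ++ w)).

Lemma ExpNode_nil P M : ExpNode P M [::] = Exp P M.
Proof. by rewrite /ExpNode /ExpAt ltr01 (Exp_proto_eq _ (proto_eq_subp_nil P)). Qed.

Lemma ExpNode_in01 P M u : proto_wf P -> (forall l, 0 <= M l <= 1) ->
  0 <= ExpNode P M u <= 1.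
Proof.
move=> wfP M01; rewrite /ExpNode /ExpAt; case: ifP => _; last by rewrite lexx ler01.
by apply: Exp_in01 => [|l]; [exact: wf_subp | exact: M01].
Qed.

Lemma ExpNode_rcons P M u : proto_wf P -> (size u < rounds P)%N -> 0 < visit P u ->
  ExpNode P M u = edge P u false * ExpNode P M (rcons u false)
                + edge P u true * ExpNode P M (rcons u true).
Proof.
move=> wfP hu visit_u_gt0; rewrite {1}/ExpNode /ExpAt visit_u_gt0.
have rounds_u : rounds (subp P u) = (rounds P - size u).-1.+1 by rewrite prednK ?subn_gt0.
rewrite (Exp_roundsS _ rounds_u) /= cats0.
have child b : edge P u b * Exp (subp (subp P u) [:: b]) (fun w => M (u ++ b :: w)) =
               edge P u b * ExpNode P M (rcons u b).
  have [->|e_neq0] := eqVneq (edge P u b) 0; first by rewrite !mul0r.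
  have e_gt0 : 0 < edge P u b by rewrite lt0r e_neq0 (wf_edges_ge0 wfP).
  rewrite /ExpNode /ExpAt visit_rcons mulr_gt0 // (Exp_proto_eq _ (proto_eq_subp_cat P u [:: b])).
  by rewrite cats1; congr (_ * _); apply: eq_Exp => w; rewrite cat_rcons.
by rewrite !child.
Qed.

Lemma edge_cond_neq0 P M u b : edge (cond P M) u b != 0 ->
  [/\ edge P u b != 0, ExpNode P M u != 1 & ExpNode P M (rcons u b) != 1].
Proof.
rewrite /= -!/(ExpNode P M _); case: ifP => [_|/negbT Eu_neq1]; first by rewrite eqxx.
rewrite !mulf_eq0 !negb_or subr_eq0 => /andP[/andP[e_neq0 Eub_neq1] _].
by split; rewrite // eq_sym.
Qed.

Lemma visit_cond_neq0 P M u : ExpNode P M [::] != 1 -> visit (cond P M) u != 0 ->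
  visit P u != 0 /\ ExpNode P M u != 1.
Proof.
move=> root_neq1; elim/last_ind: u => [|u b IH]; first by rewrite !visit_nil oner_eq0.
rewrite !visit_rcons mulf_eq0 negb_or => /andP[/IH[visit_neq0 _]].
by case/edge_cond_neq0=> e_neq0 _ ->; rewrite mulf_neq0.
Qed.

Lemma cond_edges_ge0 P M : proto_wf P -> (forall l, 0 <= M l <= 1) -> edges_ge0 (cond P M).
Proof.
move=> wfP M01 u b /= hu; rewrite -!/(ExpNode P M _); case: eqP => // _.
have /andP[_ le1_u] := ExpNode_in01 u wfP M01.
have /andP[_ le1_ub] := ExpNode_in01 (rcons u b) wfP M01.
by rewrite divr_ge0 ?mulr_ge0 ?subr_ge0 // (wf_edges_ge0 wfP).
Qed.

Lemma play_edges_ge0 P B : edges_ge0 P -> edges_ge0 (play P B).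
Proof. by move=> geP u b hu /=; case: ifP => _; rewrite ?geP ?ler0n. Qed.

Section DominatedMeasure.
Variable P : protocol R.
Hypothesis wfP : proto_wf P.

Local Notation mu := (ExpNode P (MA P)).
Local Notation facAt u := (facA (rounds P - size u).-1 (subp P u)).
Local Notation muAt u := (muA (rounds P - size u).-1 (subp P u)).

Definition MA_scaled (s : R) u := forall l, MA P (u ++ l) = s * MA (subp P u) l.

Lemma MA_scaled_nil : MA_scaled 1 [::].
Proof. by move=> l; rewrite mul1r /MA /= subn0 (domA_proto_eq _ _ (proto_eq_subp_nil P)). Qed.

Lemma MA_scaled_rcons s u b : (size u < rounds P)%N -> MA_scaled s u ->
  edge P u b != 0 -> MA_scaled (s * facAt u b) (rcons u b).
Proof.
move=> hu scaled e_neq0 l; set k := (rounds P - size u).-1.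
have rounds_u : (rounds P - size u = k.+1)%N by rewrite prednK ?subn_gt0.
rewrite cat_rcons scaled /MA /= rounds_u domA_cons /= cats0 (negbTE e_neq0) mulrA.
by rewrite size_rcons subnS -/k (domA_proto_eq _ _ (proto_eq_subp_cat P u [:: b])) cats1.
Qed.

Lemma MA_scaled_visit u : (size u <= rounds P)%N -> visit P u != 0 ->
  exists s, MA_scaled s u.
Proof.
elim/last_ind: u => [|u b IH]; first by exists 1; exact: MA_scaled_nil.
rewrite size_rcons visit_rcons mulf_eq0 negb_or => hu /andP[visit_neq0 e_neq0].
have [s scaled] := IH (ltnW hu) visit_neq0.
by exists (s * facAt u b); apply: MA_scaled_rcons.
Qed.

Lemma ExpNode_scaled s u : MA_scaled s u -> 0 < visit P u ->
  mu u = s * Exp (subp P u) (MA (subp P u)).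
Proof. by move=> scaled visit_u_gt0; rewrite /ExpNode /ExpAt visit_u_gt0 -ExpZ; apply: eq_Exp. Qed.

Lemma muAt_rcons u b : 0 < edge P u b ->
  muAt u b = Exp (subp P (rcons u b)) (MA (subp P (rcons u b))).
Proof.
move=> e_gt0; rewrite /muA /ExpAt /visit /= cats0 mulr1 e_gt0.
rewrite (Exp_proto_eq _ (proto_eq_subp_cat P u [:: b])) cats1; apply: eq_Exp => w.
by rewrite /MA /= size_rcons subnS (domA_proto_eq _ _ (proto_eq_subp_cat P u [:: b])) cats1.
Qed.

Lemma ExpNode_rcons_scaled s u b : (size u < rounds P)%N -> MA_scaled s u ->
  0 < visit P u -> edge P u b != 0 -> mu (rcons u b) = s * facAt u b * muAt u b.
Proof.
move=> hu scaled visit_u_gt0 e_neq0.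
have e_gt0 : 0 < edge P u b by rewrite lt0r e_neq0 (wf_edges_ge0 wfP).
rewrite (ExpNode_scaled (MA_scaled_rcons hu scaled e_neq0)) ?muAt_rcons //.
by rewrite visit_rcons mulr_gt0.
Qed.

Lemma ExpNode_rcons_ctrlB s u : (size u < rounds P)%N -> ~~ ctrlA P u -> MA_scaled s u ->
  0 < visit P u -> edge P u false != 0 -> edge P u true != 0 ->
  mu (rcons u false) = mu (rcons u true).
Proof.
move=> hu notA scaled visit_u_gt0 e0_neq0 e1_neq0.
have /wfP[_ sum_edges] := hu.
have e_neq1 b : edge (subp P u) [::] b != 1.
  rewrite /= cats0 -sum_edges eq_sym -subr_eq0.
  by case: b; rewrite ?addrK // addrC addKr.
have muAt_ge0 c : 0 <= muAt u c.
  apply: muA_ge0 => [|l]; first exact: wf_subp.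
  by case/andP: (domA_bound (rounds P - size u).-1 l (wf_subp [:: c] (wf_subp u wfP))).
have notA_root : ~~ ctrlA (subp P u) [::] by rewrite /= cats0.
by rewrite !(ExpNode_rcons_scaled _ scaled) // -!mulrA !facA_mul_muA // minC.
Qed.

Definition Bstrat u : bool :=
  if edge P u false == 0 then true
  else if edge P u true == 0 then false
  else muAt u true <= muAt u false.

Lemma edge_facA_Bstrat u : (size u < rounds P)%N ->
  edge P u (Bstrat u) != 0 /\ facAt u (Bstrat u) = 1.
Proof.
move=> /wfP[_ sum_edges]; rewrite /Bstrat /facA /= cats0.
have [e0|e0_neq0] := eqVneq (edge P u false) 0.
  by move: sum_edges; rewrite e0 add0r => ->; rewrite eqxx oner_eq0.
have [e1|e1_neq0] := eqVneq (edge P u true) 0.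
  by move: sum_edges; rewrite e1 addr0 => ->; rewrite eqxx oner_eq0.
by case: leP => [le_mu|/ltW le_mu] /=; rewrite ?e0_neq0 ?e1_neq0 le_mu !orbT.
Qed.

Lemma ExpNode_Bstrat s u : (size u < rounds P)%N -> ~~ ctrlA P u -> MA_scaled s u ->
  0 < visit P u -> mu (rcons u (Bstrat u)) = mu u.
Proof.
move=> hu notA scaled visit_u_gt0; have /wfP[_ sum_edges] := hu.
rewrite (ExpNode_rcons (MA P) wfP hu visit_u_gt0) /Bstrat.
have [e0|e0_neq0] := eqVneq (edge P u false) 0.
  by move: sum_edges; rewrite e0 add0r => ->; rewrite mul0r add0r mul1r.
have [e1|e1_neq0] := eqVneq (edge P u true) 0.
  by move: sum_edges; rewrite e1 addr0 => ->; rewrite mul0r addr0 mul1r.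
have eq_children := ExpNode_rcons_ctrlB hu notA scaled visit_u_gt0 e0_neq0 e1_neq0.
by case: (_ <= _); rewrite eq_children -mulrDl sum_edges mul1r.
Qed.

Hypothesis MA_lt1 : Exp P (MA P) < 1.

Lemma visit_cond_MA_neq0 u : (size u <= rounds P)%N -> visit (cond P (MA P)) u != 0 ->
  0 < visit P u /\ mu u != 1.
Proof.
move=> hu /(visit_cond_neq0 _)[|visit_neq0 mu_neq1]; first by rewrite ExpNode_nil lt_eqF.
by split=> //; rewrite visit_gt0 //; exact: wf_edges_ge0.
Qed.

Lemma edge_cond_Bstrat u : (size u < rounds P)%N -> ~~ ctrlA P u ->
  visit (cond P (MA P)) u != 0 -> edge (cond P (MA P)) u (Bstrat u) != 0.
Proof.
move=> hu notA /(visit_cond_MA_neq0 (ltnW hu))[visit_u_gt0 mu_neq1].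
have [s scaled] := MA_scaled_visit (ltnW hu) (lt0r_neq0 visit_u_gt0).
have [e_neq0 _] := edge_facA_Bstrat hu.
rewrite /= -!/(ExpNode _ _ _) (negbTE mu_neq1) (ExpNode_Bstrat hu notA scaled visit_u_gt0).
by rewrite mulfK // subr_eq0 eq_sym.
Qed.

Lemma Bstrat_valid : validB (cond P (MA P)) Bstrat.
Proof.
elim/last_ind => [|u c IH]; first by rewrite !visit_nil => _ /eqP; rewrite oner_eq0.
rewrite size_rcons !visit_rcons => hu.
have [visit0|visit_neq0] := eqVneq (visit (cond P (MA P)) u) 0.
  by rewrite IH ?mul0r // ltnW.
move/eqP; rewrite mulf_eq0 (negbTE visit_neq0) /= => /eqP e_eq0; apply/eqP.
rewrite mulf_eq0 /=; case: ifP => [_|/negbT notA]; first by rewrite e_eq0 eqxx orbT.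
have [c_B|_] := eqVneq c (Bstrat u); last by rewrite /= eqxx orbT.
by move: (edge_cond_Bstrat hu notA visit_neq0); rewrite -c_B /= e_eq0 eqxx.
Qed.

Lemma visit_play_Bstrat u : (size u <= rounds P)%N ->
  visit (play (cond P (MA P)) Bstrat) u != 0 ->
  visit (cond P (MA P)) u != 0 /\ MA_scaled 1 u.
Proof.
elim/last_ind: u => [|u c IH]; first by rewrite !visit_nil oner_eq0; split; last exact: MA_scaled_nil.
rewrite size_rcons visit_rcons mulf_eq0 negb_or => hu /andP[/(IH (ltnW hu))[visit_neq0 scaled]].
have [visit_u_gt0 _] := visit_cond_MA_neq0 (ltnW hu) visit_neq0.
have step : edge (cond P (MA P)) u c != 0 -> facAt u c = 1 ->
    visit (cond P (MA P)) (rcons u c) != 0 /\ MA_scaled 1 (rcons u c).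
  move=> econd_neq0 fac1; have [eP_neq0 _ _] := edge_cond_neq0 econd_neq0.
  split; first by rewrite visit_rcons mulf_neq0.
  by have := MA_scaled_rcons hu scaled eP_neq0; rewrite fac1 mulr1.
rewrite /=; case: ifP => [hA econd_neq0|/negbT notA].
  by apply: step => //; rewrite /facA /= cats0 hA orbT.
have [c_B _|_] := eqVneq c (Bstrat u); last by rewrite /= eqxx.
have [_ fac1] := edge_facA_Bstrat hu.
by apply: step; rewrite c_B // edge_cond_Bstrat.
Qed.

Lemma out_visit_play_Bstrat l : size l = rounds P ->
  visit (play (cond P (MA P)) Bstrat) l != 0 -> out P l = false.
Proof.
move=> hl /(visit_play_Bstrat (eq_leq hl))[visit_neq0 scaled].
have [visit_u_gt0] := visit_cond_MA_neq0 (eq_leq hl) visit_neq0.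
rewrite (ExpNode_scaled scaled visit_u_gt0) mul1r Exp_rounds0 /MA /= hl ?subnn //= cats0.
by case: (out P l); rewrite ?eqxx.
Qed.

Lemma pval_play_Bstrat : pval (play (cond P (MA P)) Bstrat) = 0.
Proof.
rewrite /pval /Exp big_seq big1 // => l /size_mem_leaves hl.
have [->|visit_neq0] := eqVneq (visit (play (cond P (MA P)) Bstrat) l) 0; first by rewrite mul0r.
by rewrite (out_visit_play_Bstrat hl visit_neq0) mulr0.
Qed.

End DominatedMeasure.

End ProtocolTheory.

Theorem lemma3p21 (R : realFieldType) (P : protocol R) :
  proto_wf P -> pval P < 1 -> BestB_is (cond P (MA P)) 1.
Proof.
move=> wfP val_lt1.
have MA_lt1 := le_lt_trans (Exp_MA_le_pval wfP) val_lt1.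
split.
  exists (Bstrat P); split; first exact: Bstrat_valid.
  by rewrite pval_play_Bstrat ?subr0.
move=> B' _; rewrite lerBlDr lerDl pval_ge0 //.
by apply/play_edges_ge0/cond_edges_ge0 => // l; apply: MA_in01.
Qed.
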